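(* Let $(\mathfrak g,[\cdot,\cdot]_{\mathfrak g},E)$ be an ENL algebra and $K:W\to\mathfrak g$ an ENE-relative Rota–Baxter operator with respect to an ENE-representation $(W;T,\rho)$, and let $(W,[\cdot,\cdot]_K,T)$ be the ENL algebra with $[u,v]_K=\rho(Ku)v-\rho(Kv)u$. Define $\mu:W\to\mathfrak{gl}(\mathfrak g)$ by $\mu(u)x=K(\rho(x)u)-[x,Ku]_{\mathfrak g}$. Then $((\mathfrak g,E),(W,T);\rho,\mu)$ is a matched pair of ENL algebras.
   Context: Vector spaces are finite-dimensional over an algebraically closed field of characteristic zero. An ENL algebra is a Lie algebra with linear $E$ satisfying $E[x,y]=[x,Ey]$ for all $x,y$. An ENE-representation $(W;T,\rho)$ of $(\mathfrak g,E)$ is a representation $\rho:\mathfrak g\to\mathfrak{gl}(W)$ with linear $T$ such that $T(\rho(x)u)=\rho(Ex)u=\rho(x)(Tu)$. An ENE-relative Rota–Baxter operator is a linear $K:W\to\mathfrak g$ with $[Ku,Kv]_{\mathfrak g}=K(\rho(Ku)v-\rho(Kv)u)$ and $E\circ K=K\circ T$. A matched pair of Lie algebras $(\mathfrak g,\mathfrak h;\rho,\mu)$: Lie algebras $\mathfrak g,\mathfrak h$ with representations $\rho:\mathfrak g\to\mathfrak{gl}(\mathfrak h)$, $\mu:\mathfrak h\to\mathfrak{gl}(\mathfrak g)$ such that $\rho(x)[\xi,\eta]_{\mathfrak h}=[\rho(x)\xi,\eta]_{\mathfrak h}+[\xi,\rho(x)\eta]_{\mathfrak h}+\rho(\mu(\eta)x)\xi-\rho(\mu(\xi)x)\eta$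 and $\mu(\xi)[x,y]_{\mathfrak g}=[\mu(\xi)x,y]_{\mathfrak g}+[x,\mu(\xi)y]_{\mathfrak g}+\mu(\rho(y)\xi)x-\mu(\rho(x)\xi)y$. For ENL algebras $(\mathfrak g,E),(\mathfrak h,F)$, a matched pair of ENL algebras is such a matched pair with $F(\rho(x)\xi)=\rho(Ex)\xi=\rho(x)(F\xi)$ and $E(\mu(\xi)x)=\mu(F\xi)x=\mu(\xi)(Ex)$ for all $x\in\mathfrak g,\xi\in\mathfrak h$. *)

From HB Require Import structures.
From mathcomp Require Import all_boot all_algebra.
Set Implicit Arguments. Unset Strict Implicit. Unset Printing Implicit Defensive.
Import GRing.Theory.
Local Open Scope ring_scope.

Section ENL.
Variable F : fieldType.

Definition is_linear (U V : lmodType F) (f : U -> V) : Prop :=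
  forall (a : F) (x y : U), f (a *: x + y) = a *: f x + f y.

Definition is_lie (g : lmodType F) (br : g -> g -> g) : Prop :=
  [/\ forall x, is_linear (br x),
      forall y, is_linear (fun x => br x y),
      forall x, br x x = 0 &
      forall x y z, br x (br y z) + br y (br z x) + br z (br x y) = 0].

Definition is_rep (g W : lmodType F) (br : g -> g -> g) (rho : g -> W -> W) : Prop :=
  [/\ forall x, is_linear (rho x),
      forall u, is_linear (fun x => rho x u) &
      forall x y u, rho (br x y) u = rho x (rho y u) - rho y (rho x u)].

Definition is_ENL (g : lmodType F) (br : g -> g -> g) (E : g -> g) : Prop :=
  [/\ is_lie br, is_linear E & forall x y, E (br x y) = br x (E y)].

Definition is_ENE_rep (g W : lmodType F) (br : g -> g -> g) (E : g -> g)
  (T : W -> W) (rho : g -> W -> W) : Prop :=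
  [/\ is_rep br rho, is_linear T &
      forall x u, T (rho x u) = rho (E x) u /\ rho (E x) u = rho x (T u)].

Definition is_ENE_RB (g W : lmodType F) (br : g -> g -> g) (E : g -> g)
  (T : W -> W) (rho : g -> W -> W) (K : W -> g) : Prop :=
  [/\ is_linear K,
      forall u v, br (K u) (K v) = K (rho (K u) v - rho (K v) u) &
      forall u, E (K u) = K (T u)].

Definition is_matched_pair (g h : lmodType F) (brg : g -> g -> g) (brh : h -> h -> h)
  (rho : g -> h -> h) (mu : h -> g -> g) : Prop :=
  [/\ is_lie brg, is_lie brh, is_rep brg rho /\ is_rep brh mu,
      forall x xi eta, rho x (brh xi eta) =
        brh (rho x xi) eta + brh xi (rho x eta) + rho (mu eta x) xi - rho (mu xi x) eta &
      forall xi x y, mu xi (brg x y) =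
        brg (mu xi x) y + brg x (mu xi y) + mu (rho y xi) x - mu (rho x xi) y].

Definition is_matched_pair_ENL (g h : lmodType F) (brg : g -> g -> g) (E : g -> g)
  (brh : h -> h -> h) (Fh : h -> h) (rho : g -> h -> h) (mu : h -> g -> g) : Prop :=
  [/\ is_ENL brg E, is_ENL brh Fh, is_matched_pair brg brh rho mu,
      forall x xi, Fh (rho x xi) = rho (E x) xi /\ rho (E x) xi = rho x (Fh xi) &
      forall x xi, E (mu xi x) = mu (Fh xi) x /\ mu (Fh xi) x = mu xi (E x)].

End ENL.

Definition bracketK (F : fieldType) (g W : lmodType F) (rho : g -> W -> W) (K : W -> g)
  (u v : W) : W := rho (K u) v - rho (K v) u.

Definition muK (F : fieldType) (g W : lmodType F) (br : g -> g -> g)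
  (rho : g -> W -> W) (K : W -> g) (u : W) (x : g) : g := K (rho x u) - br x (K u).

From mathcomp Require Import all_boot all_algebra.
Import GRing.Theory.
Set Implicit Arguments.
Unset Strict Implicit.
Local Open Scope ring_scope.

(* Since [K] sends [ [u,v]_K ] to [ [K u, K v] ], the map [rho \o K] is a
   representation of [ [.,.]_K ], which yields the Jacobi identity of
   [ [.,.]_K ]; the same fact, combined with the Jacobi identity of [g] in
   Leibniz form, makes [mu] a representation.  Of the two matched-pair
   compatibilities, the one for [rho] only uses that [rho] is a
   representation, and the one for [mu] needs in addition the Jacobi identity
   of [g] but not the Rota-Baxter identity.  After expanding [ [.,.]_K ] and
   [mu], each identity is a cancellation in an abelian group.  Finally, [E]
   and [T] commute with all the structure maps because [E \o K = K \o T]. *)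

Section ZmodNormalForm.
Variable V : zmodType.

Inductive zexpr := ZAtom of nat | ZAdd of zexpr & zexpr | ZOpp of zexpr | ZZero.

Fixpoint zeval (env : seq V) (e : zexpr) : V :=
  match e with
  | ZAtom i => nth 0 env i
  | ZAdd a b => zeval env a + zeval env b
  | ZOpp a => - zeval env a
  | ZZero => 0
  end.

Fixpoint coef_add (s t : seq int) : seq int :=
  match s, t with
  | [::], _ => t
  | _, [::] => s
  | a :: s', b :: t' => (a + b) :: coef_add s' t'
  end.

Definition coef_opp (s : seq int) : seq int := map -%R s.

Fixpoint zcoef (e : zexpr) : seq int :=
  match e with
  | ZAtom i => nseq i 0 ++ [:: 1]
  | ZAdd a b => coef_add (zcoef a) (zcoef b)
  | ZOpp a => coef_opp (zcoef a)
  | ZZero => [::]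
  end.

Fixpoint coef_eval (s : seq int) (env : seq V) : V :=
  if s is c :: s' then head 0 env *~ c + coef_eval s' (behead env) else 0.

Lemma coef_eval_add s t env :
  coef_eval (coef_add s t) env = coef_eval s env + coef_eval t env.
Proof.
elim: s t env => [|a s IH] [|b t] env /=; rewrite ?add0r ?addr0 //.
by rewrite IH mulrzDr addrACA.
Qed.

Lemma coef_eval_opp s env : coef_eval (coef_opp s) env = - coef_eval s env.
Proof. by elim: s env => [|a s IH] env /=; rewrite ?oppr0 // IH mulrNz opprD. Qed.

Lemma coef_eval_atom i env : coef_eval (nseq i 0 ++ [:: 1]) env = nth 0 env i.
Proof.
elim: i env => [|i IH] [|x env] /=; rewrite ?mulr1z ?mulr0z ?add0r ?addr0 //.
by rewrite IH nth_nil.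
Qed.

Lemma coef_eval_zcoef env e : zeval env e = coef_eval (zcoef e) env.
Proof.
elim: e => [i|a IHa b IHb|a IHa|] //=.
- by rewrite coef_eval_atom.
- by rewrite coef_eval_add IHa IHb.
- by rewrite coef_eval_opp IHa.
Qed.

Lemma zeval_eq env e1 e2 :
  all (eq_op^~ 0) (coef_add (zcoef e1) (coef_opp (zcoef e2))) ->
  zeval env e1 = zeval env e2.
Proof.
move=> all0; apply/eqP; rewrite -subr_eq0 !coef_eval_zcoef -coef_eval_opp.
rewrite -coef_eval_add; apply/eqP.
elim: (coef_add _ _) (env) all0 => [|c s IH] env' //= /andP[/eqP -> /IH ->].
by rewrite mulr0z addr0.
Qed.

End ZmodNormalForm.

(* [zmodule] proves an equation between sums and opposites of arbitrary terms
   of a [zmodType], the terms being treated as atoms up to conversion. *)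
Ltac zmod_index x l :=
  match l with
  | cons ?y _ => let _ := constr:(@erefl _ x : x = y) in constr:(0%N)
  | cons _ ?l' => let n := zmod_index x l' in constr:(S n)
  end.

Ltac zmod_atoms t l :=
  lazymatch t with
  | GRing.add ?a ?b => let l := zmod_atoms a l in zmod_atoms b l
  | GRing.opp ?a => zmod_atoms a l
  | GRing.zero => l
  | _ => match l with
         | _ => let _ := zmod_index t l in l
         | _ => constr:(cons t l)
         end
  end.

Ltac zmod_reify l t :=
  lazymatch t with
  | GRing.add ?a ?b =>
      let ra := zmod_reify l a in let rb := zmod_reify l b in constr:(ZAdd ra rb)
  | GRing.opp ?a => let ra := zmod_reify l a in constr:(ZOpp ra)
  | GRing.zero => constr:(ZZero)
  | _ => let n := zmod_index t l in constr:(ZAtom n)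
  end.

Ltac zmodule :=
  lazymatch goal with |- @eq ?V ?L ?R =>
    let l := zmod_atoms L (@nil V) in
    let l := zmod_atoms R l in
    let eL := zmod_reify l L in
    let eR := zmod_reify l R in
    change (zeval l eL = zeval l eR); apply: zeval_eq; vm_compute; reflexivity
  end.

Section LinearMaps.
Variable F : fieldType.

Section Rules.
Variables (U V : lmodType F) (f : U -> V).
Hypothesis lin_f : is_linear f.

Lemma is_linear0 : f 0 = 0.
Proof.
have := lin_f 1 0 0; rewrite !scale1r addr0 => f00.
by apply: (@addrI _ (f 0)); rewrite addr0 -f00.
Qed.

Lemma is_linearD x y : f (x + y) = f x + f y.
Proof. by have := lin_f 1 x y; rewrite !scale1r. Qed.

Lemma is_linearN x : f (- x) = - f x.
Proof. by have := lin_f (-1) x 0; rewrite !addr0 is_linear0 addr0 !scaleN1r. Qed.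

Lemma is_linearB x y : f (x - y) = f x - f y.
Proof. by rewrite is_linearD is_linearN. Qed.

End Rules.

Lemma is_linear_comp (U V X : lmodType F) (f : V -> X) (h : U -> V) :
  is_linear f -> is_linear h -> is_linear (f \o h).
Proof. by move=> lin_f lin_h a x y /=; rewrite lin_h lin_f. Qed.

Lemma is_linear_sub (U V : lmodType F) (f h : U -> V) :
  is_linear f -> is_linear h -> is_linear (fun x => f x - h x).
Proof. by move=> lin_f lin_h a x y; rewrite lin_f lin_h scalerBr; zmodule. Qed.

End LinearMaps.

Section LieAlgebras.
Variables (F : fieldType) (g : lmodType F) (br : g -> g -> g) (E : g -> g).
Hypotheses (lie_br : is_lie br) (lin_E : is_linear E).
Hypothesis E_bracketr : forall x y, E (br x y) = br x (E y).

Let brN x y : br x (- y) = - br x y.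
Proof. by case: lie_br => lin_br _ _ _; apply: is_linearN. Qed.

Lemma lie_anticomm x y : br x y = - br y x.
Proof.
case: lie_br => lin_br lin_brl br_alt _; apply/eqP; rewrite -addr_eq0.
have := br_alt (x + y).
by rewrite (is_linearD (lin_brl _)) !(is_linearD (lin_br _)) !br_alt add0r addr0 => ->.
Qed.

Lemma lie_leibniz x y z : br x (br y z) = br (br x y) z + br y (br x z).
Proof.
case: lie_br => _ _ _ /(_ x y z) jacobi.
rewrite [br z x]lie_anticomm [br z (br x y)]lie_anticomm brN in jacobi.
by rewrite -[LHS]subr0 -jacobi; zmodule.
Qed.

Lemma E_bracketl x y : E (br x y) = br (E x) y.
Proof.
by rewrite lie_anticomm (is_linearN lin_E) E_bracketr [RHS]lie_anticomm.
Qed.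

End LieAlgebras.

Section RelativeRotaBaxter.
Variables (F : fieldType) (g W : lmodType F).
Variables (br : g -> g -> g) (rho : g -> W -> W) (K : W -> g).
Variables (E : g -> g) (T : W -> W).
Hypotheses (lie_br : is_lie br) (rep_rho : is_rep br rho) (lin_K : is_linear K).
Hypothesis K_morph : forall u v, br (K u) (K v) = K (bracketK rho K u v).
Hypotheses (lin_E : is_linear E) (lin_T : is_linear T).
Hypothesis E_bracketr : forall x y, E (br x y) = br x (E y).
Hypothesis rho_ET : forall x u, T (rho x u) = rho (E x) u /\ rho (E x) u = rho x (T u).
Hypothesis K_ET : forall u, E (K u) = K (T u).

Local Notation brK := (bracketK rho K).
Local Notation mu := (muK br rho K).

Let br_linear x : is_linear (br x). Proof. by case: lie_br. Qed.
Let br_linear_l y : is_linear (br^~ y). Proof. by case: lie_br. Qed.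
Let rho_linear x : is_linear (rho x). Proof. by case: rep_rho. Qed.
Let rho_linear_l u : is_linear (rho^~ u). Proof. by case: rep_rho. Qed.
Let rho_bracket x y u : rho (br x y) u = rho x (rho y u) - rho y (rho x u).
Proof. by case: rep_rho. Qed.

Let brB x a b : br x (a - b) = br x a - br x b := is_linearB (br_linear x) a b.
Let brBl y a b : br (a - b) y = br a y - br b y := is_linearB (br_linear_l y) a b.
Let rhoB x u v : rho x (u - v) = rho x u - rho x v := is_linearB (rho_linear x) u v.
Let rhoBl u x y : rho (x - y) u = rho x u - rho y u := is_linearB (rho_linear_l u) x y.
Let KB u v : K (u - v) = K u - K v := is_linearB lin_K u v.

Lemma is_lie_bracketK : is_lie brK.
Proof.
split=> [u | v | u | u v w].
- exact: is_linear_sub (rho_linear (K u)) (is_linear_comp (rho_linear_l u) lin_K).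
- exact: is_linear_sub (is_linear_comp (rho_linear_l v) lin_K) (rho_linear (K v)).
- exact: subrr.
- by rewrite /bracketK -!K_morph !rho_bracket !rhoB; zmodule.
Qed.

Lemma muK_muK u v x :
  mu u (mu v x) = K (rho (K u) (rho x v) - rho (br x (K v)) u) + br (br x (K v)) (K u).
Proof. by rewrite /muK rhoBl brBl K_morph /bracketK !KB; zmodule. Qed.

Lemma is_rep_muK : is_rep brK mu.
Proof.
split=> [u | x | u v x].
- exact: is_linear_sub (is_linear_comp lin_K (rho_linear_l u)) (br_linear_l (K u)).
- exact: is_linear_sub (is_linear_comp lin_K (rho_linear x))
                       (is_linear_comp (br_linear x) lin_K).
- rewrite !muK_muK {1}/muK -(K_morph u v) (lie_leibniz lie_br).
  rewrite [br (K u) (br x (K v))](lie_anticomm lie_br).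
  by rewrite /bracketK rhoB !rho_bracket !KB; zmodule.
Qed.

Lemma rho_bracketK x u v :
  rho x (brK u v) = brK (rho x u) v + brK u (rho x v) + rho (mu v x) u - rho (mu u x) v.
Proof. by rewrite /muK /bracketK !rhoB !rhoBl !rho_bracket; zmodule. Qed.

Lemma muK_bracket u x y :
  mu u (br x y) = br (mu u x) y + br x (mu u y) + mu (rho y u) x - mu (rho x u) y.
Proof.
rewrite /muK rho_bracket KB brBl brB (lie_leibniz lie_br x y (K u)).
rewrite [br (K (rho x u)) y](lie_anticomm lie_br).
by rewrite [br (br x (K u)) y](lie_anticomm lie_br); zmodule.
Qed.

Let T_rho x u : T (rho x u) = rho x (T u).
Proof. by case: (rho_ET x u) => -> ->. Qed.

Let rho_E x u : rho (E x) u = rho x (T u).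
Proof. by case: (rho_ET x u). Qed.

Lemma is_ENL_bracketK : is_ENL brK T.
Proof.
split=> [|//| u v]; first exact: is_lie_bracketK.
by rewrite /bracketK (is_linearB lin_T) !T_rho -K_ET rho_E.
Qed.

Lemma muK_ET x u : E (mu u x) = mu (T u) x /\ mu (T u) x = mu u (E x).
Proof.
rewrite /muK (is_linearB lin_E) E_bracketr !K_ET T_rho; split=> //.
by rewrite rho_E -(E_bracketl lie_br lin_E E_bracketr) E_bracketr K_ET.
Qed.

End RelativeRotaBaxter.

Theorem proposition6p5 (F : closedFieldType) (hF : [pchar F]%R =i pred0)
  (g W : vectType F) (br : g -> g -> g) (E : g -> g)
  (T : W -> W) (rho : g -> W -> W) (K : W -> g) :
  is_ENL br E ->
  is_ENE_rep br E T rho ->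
  is_ENE_RB br E T rho K ->
  is_matched_pair_ENL br E (bracketK rho K) T rho (muK br rho K).
Proof.
move=> ENL_E [rep_rho lin_T rho_ET] [lin_K K_morph K_ET].
have [lie_br lin_E E_bracketr] := ENL_E.
split=> //.
- exact: (is_ENL_bracketK rep_rho lin_K K_morph lin_T rho_ET K_ET).
- split=> //; first exact: (is_lie_bracketK rep_rho lin_K K_morph).
  + by split=> //; apply: (is_rep_muK lie_br rep_rho lin_K K_morph).
  + exact: (rho_bracketK K rep_rho).
  + exact: (muK_bracket lie_br rep_rho lin_K).
- exact: (muK_ET lie_br lin_E E_bracketr rho_ET K_ET).
Qed.
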